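(* Let $(G,u)$ be a countable unperforated partially ordered abelian group with order unit $u$. Then $$\bigcap_{\tau\in S(G,u)}\tau(G)=\{\lambda\in\mathbb R:\ \exists g\in G \text{ such that } \tau(g)=\lambda \text{ for all }\tau\in S(G,u)\}.$$
   Context: $u$ is an order unit: for every $g$ there is $n\in\mathbb Z^+$ with $nu-g\ge0$. Unperforated: $ng\ge0$ for some $n\in\mathbb N$ implies $g\ge0$. $S(G,u)$ is the set of states, i.e. homomorphisms $\tau:G\to\mathbb R$ with $\tau(G^+)\ge0$ and $\tau(u)=1$. *)

From HB Require Import structures.
From mathcomp Require Import all_boot all_order all_algebra.
From mathcomp Require Import classical_sets boolp.
From mathcomp Require Import Rstruct.
Set Implicit Arguments. Unset Strict Implicit. Unset Printing Implicit Defensive.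
Import GRing.Theory Num.Theory.
Local Open Scope ring_scope.
Local Open Scope classical_set_scope.

(* A partially ordered abelian group is given by an abelian group G together
   with its positive cone P = G^+ (g <= h iff h - g \in P). *)
Definition is_pos_cone (G : zmodType) (P : set G) : Prop :=
  P 0 /\ (forall x y, P x -> P y -> P (x + y)) /\
  (forall x, P x -> P (- x) -> x = 0).

Definition is_order_unit (G : zmodType) (P : set G) (u : G) : Prop :=
  forall g, exists n : nat, (0 < n)%N /\ P (u *+ n - g).

Definition unperforated (G : zmodType) (P : set G) : Prop :=
  forall (g : G) (n : nat), (0 < n)%N -> P (g *+ n) -> P g.

Definition is_state (G : zmodType) (P : set G) (u : G) (tau : G -> Rdefinitions.R) : Prop :=
  (forall x y, tau (x + y) = tau x + tau y) /\
  (forall x, P x -> 0 <= tau x) /\ tau u = 1.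

Definition states (G : zmodType) (P : set G) (u : G) : set (G -> Rdefinitions.R) :=
  [set tau | is_state P u tau].

(* Suppose [l] lies in every [tau(G)] but no [g] has constant value [l] on
   [S(G,u)]; pick a state [T g] with [T g g <> l] and enumerate [G] as
   [g_0, g_1, ...].  Starting from [T g_0], let [s_(k+1)] be a convex
   combination of [s_k] and [T g_k] with a small weight chosen so that
   [s_(k+1) g_k <> l], the weights decaying fast enough that all later steps
   move the value at [g_k] by less than its distance to [l].  The order unit
   bounds every state pointwise, so the [s_k] converge pointwise to a state
   [sig], which avoids [l] everywhere: a contradiction with [l \in sig(G)]. *)

From Stdlib Require Import Reals Lra Lia.
From Coquelicot Require Import Coquelicot.
Open Scope R_scope.

Lemma halving_is_lim_seq0 (h : nat -> R) :
  (forall k, 0 <= h k) -> (forall k, h (S k) <= h k / 2) -> is_lim_seq h 0.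
Proof.
  intros Hpos Hhalf.
  assert (Hgeo : forall k, h k <= h O * (/2) ^ k).
  { induction k as [|k IH]; simpl; [lra|]. specialize (Hhalf k). lra. }
  apply (is_lim_seq_le_le (fun _ => 0) h (fun k => h O * (/2) ^ k)).
  - intro k. split; [apply Hpos | apply Hgeo].
  - apply is_lim_seq_const.
  - replace (Finite 0) with (Rbar_mult (h O) 0) by (simpl; f_equal; ring).
    apply is_lim_seq_scal_l, is_lim_seq_geom. rewrite Rabs_pos_eq; lra.
Qed.

Lemma halving_increments_tail (u h : nat -> R) (c : R) :
  0 <= c -> (forall k, h (S k) <= h k / 2) ->
  (forall k, Rabs (u (S k) - u k) <= c * h k) ->
  forall k j, Rabs (u (j + k)%nat - u k) <= 2 * c * (h k - h (j + k)%nat).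
Proof.
  intros Hc Hhalf Hinc k j. induction j as [|j IH].
  - simpl. unfold Rminus. rewrite Rplus_opp_r, Rabs_R0. lra.
  - change (S j + k)%nat with (S (j + k)).
    pose proof (Hinc (j + k)%nat). pose proof (Hhalf (j + k)%nat).
    pose proof (Rabs_triang (u (S (j + k)) - u (j + k)%nat) (u (j + k)%nat - u k)) as Htri.
    replace (u (S (j + k)) - u (j + k)%nat + (u (j + k)%nat - u k))
      with (u (S (j + k)) - u k) in Htri by ring.
    nra.
Qed.

Lemma halving_increments_cvg (u h : nat -> R) (c : R) :
  0 <= c -> (forall k, 0 <= h k) -> (forall k, h (S k) <= h k / 2) ->
  (forall k, Rabs (u (S k) - u k) <= c * h k) ->
  exists l : R, is_lim_seq u l /\ forall k, Rabs (l - u k) <= 2 * c * h k.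
Proof.
  intros Hc Hpos Hhalf Hinc.
  assert (Htail : forall k n, (k <= n)%nat -> Rabs (u n - u k) <= 2 * c * h k).
  { intros k n Hkn. replace n with ((n - k) + k)%nat by lia.
    pose proof (halving_increments_tail u h c Hc Hhalf Hinc k (n - k)).
    pose proof (Hpos ((n - k) + k)%nat). nra. }
  assert (Hcauchy : ex_finite_lim_seq u).
  { apply ex_lim_seq_cauchy_corr. intro eps.
    assert (H0 : is_lim_seq (fun k => 4 * c * h k) 0).
    { replace (Finite 0) with (Rbar_mult (4 * c) 0) by (simpl; f_equal; ring).
      apply is_lim_seq_scal_l, halving_is_lim_seq0; assumption. }
    apply is_lim_seq_spec in H0. destruct (H0 eps) as [N HN].
    exists N. intros n m Hn Hm.
    specialize (HN N (le_n N)). rewrite Rminus_0_r in HN.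
    pose proof (Rle_abs (4 * c * h N)).
    pose proof (Htail N n Hn). pose proof (Htail N m Hm).
    pose proof (Rabs_triang (u n - u N) (- (u m - u N))) as Htri.
    rewrite Rabs_Ropp in Htri.
    replace (u n - u N + - (u m - u N)) with (u n - u m) in Htri by ring.
    lra. }
  destruct Hcauchy as [l Hl]. exists l. split; [exact Hl|].
  intro k.
  apply (is_lim_seq_le (fun n => Rabs (u (n + k)%nat - u k)) (fun _ => 2 * c * h k)
           (Rabs (l - u k)) (2 * c * h k)).
  - intro n. apply Htail. lia.
  - apply (is_lim_seq_abs _ (Finite (l - u k))), (is_lim_seq_minus' _ (fun _ => u k)).
    + apply (is_lim_seq_incr_n u k l), Hl.
    + apply is_lim_seq_const.
  - apply is_lim_seq_const.
Qed.

Definition mix {X : Type} (s t : X -> R) (ep : R) : X -> R :=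
  fun y => (1 - ep) * s y + ep * t y.

(* One of the two weights h, h/2 works, since an affine function of the
   weight that is nonzero at weight 1 vanishes at most once. *)
Definition avoiding_weight (a b h : R) : R :=
  if Req_dec_T ((1 - h) * a + h * b) 0 then h / 2 else h.

Lemma avoiding_weight_spec (a b h : R) : b <> 0 -> 0 < h ->
  (avoiding_weight a b h = h \/ avoiding_weight a b h = h / 2) /\
  (1 - avoiding_weight a b h) * a + avoiding_weight a b h * b <> 0.
Proof.
  intros Hb Hh. unfold avoiding_weight.
  destruct (Req_dec_T ((1 - h) * a + h * b) 0) as [E|E]; split; auto.
  intro E2. apply Hb. assert (a = b) by nra. subst. nra.
Qed.

Section AvoidValue.

Variables (X : Type) (St : (X -> R) -> Prop) (lam : R) (B : X -> R).
Variables (e : nat -> X) (T : X -> X -> R).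

Hypothesis St_mix :
  forall s t ep, St s -> St t -> 0 <= ep <= 1 -> St (mix s t ep).
Hypothesis St_lim : forall (f : nat -> X -> R) (g : X -> R),
  (forall k, St (f k)) -> (forall x, is_lim_seq (fun k => f k x) (g x)) -> St g.
Hypothesis St_bound : forall x s, St s -> Rabs (s x) <= B x.
Hypothesis e_surj : forall x, exists k, e k = x.
Hypothesis T_in : forall x, St (T x).
Hypothesis T_avoid : forall x, T x x <> lam.

(* The radius bounds all later weights; its second term keeps the total later
   drift at [e k] below the distance to [lam] secured at step [k]. *)
Definition avoid_step (k : nat) (p : (X -> R) * R) : (X -> R) * R :=
  let s := fst p in let h := snd p in let x := e k in
  let s' := mix s (T x) (avoiding_weight (s x - lam) (T x x - lam) h) in
  (s', Rmin (h / 2) (Rabs (s' x - lam) / (4 * (B x + 1)))).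

Fixpoint avoid_seq (k : nat) : (X -> R) * R :=
  match k with
  | O => (T (e O), / 2)
  | S k => avoid_step k (avoid_seq k)
  end.

Definition approx (k : nat) : X -> R := fst (avoid_seq k).
Definition radius (k : nat) : R := snd (avoid_seq k).
Definition weight (k : nat) : R :=
  avoiding_weight (approx k (e k) - lam) (T (e k) (e k) - lam) (radius k).

Lemma approx_S k : approx (S k) = mix (approx k) (T (e k)) (weight k).
Proof. reflexivity. Qed.

Lemma radius_S k : radius (S k) =
  Rmin (radius k / 2) (Rabs (approx (S k) (e k) - lam) / (4 * (B (e k) + 1))).
Proof. reflexivity. Qed.

Lemma B_ge0 x : 0 <= B x.
Proof. pose proof (St_bound x _ (T_in x)). pose proof (Rabs_pos (T x x)). lra. Qed.

Lemma weight_spec k : 0 < radius k ->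
  0 < weight k <= radius k /\ approx (S k) (e k) <> lam.
Proof.
  intro Hr.
  destruct (avoiding_weight_spec (approx k (e k) - lam) (T (e k) (e k) - lam)
              (radius k)) as [Hw Hne]; [pose proof (T_avoid (e k)); lra | exact Hr |].
  fold (weight k) in Hw, Hne. rewrite approx_S. unfold mix.
  split; [lra|]. intro E. apply Hne. lra.
Qed.

Lemma avoid_seq_inv k : (0 < radius k <= / 2) /\ St (approx k).
Proof.
  induction k as [|k [[Hr0 Hr1] Hin]].
  - split; [unfold radius; simpl; lra | apply T_in].
  - destruct (weight_spec k Hr0) as [Hw Hne].
    split.
    + assert (0 < Rabs (approx (S k) (e k) - lam) / (4 * (B (e k) + 1))).
      { apply Rdiv_lt_0_compat; [apply Rabs_pos_lt | pose proof (B_ge0 (e k))]; lra. }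
      rewrite radius_S. unfold Rmin. destruct Rle_dec; lra.
    + rewrite approx_S. apply St_mix; [exact Hin | apply T_in | lra].
Qed.

Lemma radius_pos k : 0 < radius k.
Proof. apply avoid_seq_inv. Qed.

Lemma radius_half k : radius (S k) <= radius k / 2.
Proof. rewrite radius_S. apply Rmin_l. Qed.

Lemma approx_increment k y :
  Rabs (approx (S k) y - approx k y) <= 2 * B y * radius k.
Proof.
  destruct (weight_spec k (radius_pos k)) as [Hw _].
  rewrite approx_S. unfold mix.
  replace ((1 - weight k) * approx k y + weight k * T (e k) y - approx k y)
    with (weight k * (T (e k) y - approx k y)) by ring.
  rewrite Rabs_mult, (Rabs_pos_eq (weight k)) by lra.
  pose proof (St_bound y _ (T_in (e k))).
  pose proof (St_bound y _ (proj2 (avoid_seq_inv k))).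
  pose proof (Rabs_triang (T (e k) y) (- approx k y)) as Htri. rewrite Rabs_Ropp in Htri.
  pose proof (Rabs_pos (T (e k) y - approx k y)).
  assert (Rabs (T (e k) y - approx k y) <= 2 * B y) by (unfold Rminus; lra).
  nra.
Qed.

Lemma approx_cvg y : exists l : R, is_lim_seq (fun k => approx k y) l /\
  forall k, Rabs (l - approx k y) <= 2 * (2 * B y) * radius k.
Proof.
  apply (halving_increments_cvg _ radius).
  - pose proof (B_ge0 y). lra.
  - intro k. left. apply radius_pos.
  - apply radius_half.
  - intro k. apply approx_increment.
Qed.

Lemma avoid_value_exists : exists sig, St sig /\ forall x, sig x <> lam.
Proof.
  set (sig y := real (Lim_seq (fun k => approx k y))).
  assert (Hsig : forall y, is_lim_seq (fun k => approx k y) (sig y) /\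
            forall k, Rabs (sig y - approx k y) <= 4 * B y * radius k).
  { intro y. destruct (approx_cvg y) as [l [Hl Hb]].
    unfold sig. rewrite (is_lim_seq_unique _ _ Hl). simpl.
    split; [exact Hl | intro k; specialize (Hb k); lra]. }
  exists sig. split.
  - apply (St_lim approx); [intro k; apply avoid_seq_inv | apply Hsig].
  - intros x Hx. destruct (e_surj x) as [k <-].
    destruct (weight_spec k (radius_pos k)) as [_ Hne].
    pose proof (proj2 (Hsig (e k)) (S k)) as Hnear. rewrite Hx in Hnear.
    assert (Hfar : radius (S k) * (4 * (B (e k) + 1)) <= Rabs (approx (S k) (e k) - lam)).
    { pose proof (B_ge0 (e k)).
      apply (Rmult_le_reg_r (/ (4 * (B (e k) + 1)))); [apply Rinv_0_lt_compat; lra|].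
      rewrite Rmult_assoc, Rinv_r, Rmult_1_r by lra. rewrite radius_S. apply Rmin_r. }
    rewrite <- Rabs_Ropp in Hnear.
    replace (- (lam - approx (S k) (e k))) with (approx (S k) (e k) - lam) in Hnear by ring.
    pose proof (radius_pos (S k)). nra.
Qed.

End AvoidValue.
Close Scope R_scope.

From HB Require Import structures.
From mathcomp Require Import all_boot all_order all_algebra.
From mathcomp Require Import classical_sets boolp.
From mathcomp Require Import Rstruct.
From mathcomp Require Import ring lra.
Set Implicit Arguments. Unset Strict Implicit. Unset Printing Implicit Defensive.
Import GRing.Theory Num.Theory.
Local Open Scope ring_scope.
Local Open Scope classical_set_scope.

Section AdditiveMaps.
Variables (G V : zmodType) (f : G -> V).
Hypothesis fD : {morph f : x y / x + y}.

Lemma additive_map0 : f 0 = 0.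
Proof. by apply: (addrI (f 0)); rewrite -fD !addr0. Qed.

Lemma additive_mapN x : f (- x) = - f x.
Proof. by apply/eqP; rewrite -addr_eq0 -fD addNr additive_map0. Qed.

Lemma additive_mapMn x n : f (x *+ n) = f x *+ n.
Proof. by elim: n => [|n IH]; rewrite ?mulr0n ?additive_map0 // !mulrS fD IH. Qed.

End AdditiveMaps.

Section StateSpace.
Variables (G : zmodType) (P : set G) (u : G).

Lemma state_bounded : is_order_unit P u ->
  forall g, exists B, forall tau, states P u tau -> Rle (Rabs (tau g)) B.
Proof.
move=> Hu g; have [n [_ Pn]] := Hu g; have [m [_ Pm]] := Hu (- g).
exists (n%:R + m%:R) => tau [tauD [tauP tau1]].
have := tauP _ Pn; have := tauP _ Pm.
rewrite opprK !tauD (additive_mapN tauD) !(additive_mapMn tauD) tau1 => Hm Hn.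
have n0 : 0 <= n%:R :> R := ler0n _ _.
have m0 : 0 <= m%:R :> R := ler0n _ _.
by apply/RleP; rewrite RabsE ler_norml; apply/andP; split; lra.
Qed.

Lemma state_mix s t ep : states P u s -> states P u t -> Rle 0 ep /\ Rle ep 1 ->
  states P u (mix s t ep).
Proof.
move=> [sD [sP s1]] [tD [tP t1]] [/RleP ep0 /RleP ep1].
rewrite R0E in ep0; rewrite R1E in ep1.
have mixE x : mix s t ep x = (1 - ep) * s x + ep * t x.
  by rewrite /mix RplusE !RmultE RminusE R1E.
split; [by move=> x y; rewrite !mixE sD tD; ring | split; last by rewrite mixE s1 t1; ring].
by move=> x Px; rewrite mixE; have := sP _ Px; have := tP _ Px; nra.
Qed.

Lemma state_lim (f : nat -> G -> R) (g : G -> R) :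
  (forall k, states P u (f k)) ->
  (forall x, is_lim_seq (fun k => f k x) (g x)) -> states P u g.
Proof.
move=> Hf Hlim.
have lim_eq x l : is_lim_seq (fun k => f k x) (Rbar.Finite l) -> g x = l.
  by move=> Hl; have := is_lim_seq_unique _ _ Hl; rewrite (is_lim_seq_unique _ _ (Hlim x)) => -[].
split; [move=> x y | split => [x Px|]].
- apply: lim_eq; apply: (is_lim_seq_ext (fun k => Rplus (f k x) (f k y))).
    by move=> k; have [fD _] := Hf k; rewrite fD.
  exact: is_lim_seq_plus'.
- apply/RleP; apply: (is_lim_seq_le (fun=> 0) (fun k => f k x) (Rbar.Finite 0) (Rbar.Finite (g x))).
  + by move=> k; have [_ [fP _]] := Hf k; apply/RleP/fP.
  + exact: is_lim_seq_const.
  + exact: Hlim.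
- apply: lim_eq; apply: (is_lim_seq_ext (fun=> 1%R)); last exact: is_lim_seq_const.
  by move=> k; have [_ [_ f1]] := Hf k.
Qed.

End StateSpace.

Theorem mainTheorem10 (G : countZmodType) (P : set G) (u : G) :
  is_pos_cone P -> is_order_unit P u -> unperforated P ->
  \bigcap_(tau in states P u) (tau @` setT) =
  [set l : Rdefinitions.R | exists g : G, forall tau, states P u tau -> tau g = l].
Proof.
move=> _ Hu _; rewrite eqEsubset; split => [l Hl|l [g Hg] tau /Hg <-]; last by exists g.
apply: contrapT => Hconst.
have Hsep g : exists tau, states P u tau /\ tau g <> l.
  apply: contrapT => Hn; apply: Hconst; exists g => tau Htau.
  by apply: contrapT => Hd; apply: Hn; exists tau.
have [T HT] := choice Hsep.
have [B HB] := choice (state_bounded Hu).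
pose e k : G := odflt 0 (unpickle k).
have e_surj x : exists k, e k = x by exists (pickle x); rewrite /e pickleK.
have [sig [Hsig Havoid]] := @avoid_value_exists G (states P u) l B e T
  (@state_mix _ P u) (@state_lim _ P u) HB e_surj (fun x => proj1 (HT x)) (fun x => proj2 (HT x)).
by have [g _ /Havoid] := Hl sig Hsig.
Qed.
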